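(* Let $\Delta^{\mathcal T}_{\mathcal R}$ be any of the ten systems $\Delta^{\mathcal T}_{\equiv}$, $\Delta^{\mathcal T}_{=_\beta}$ ($\mathcal T\in\{CD,CDS,CDV,BCD\}$), $\Delta^{CDV}_{=_{\beta\eta}}$, $\Delta^{BCD}_{=_{\beta\eta}}$. For every strongly normalizing pure $\lambda$-term $M$ there exist a basis $B$, a type $\sigma$ and a $\Delta$-term $\Delta$ such that $\|\Delta\|\equiv M$ and $B\vdash^{\mathcal T}_{\mathcal R}\Delta:\sigma$.
   Context: Type atoms: a set $\mathbb{A}$ of symbols; $\omega$ denotes a distinguished atom (the universal type). $\mathbb{A}_\infty=\{\mathtt a_i\mid i\in\mathbb N\}$ with each $\mathtt a_i\neq\omega$, and $\mathbb{A}^\omega_\infty=\mathbb{A}_\infty\cup\{\omega\}$. Intersection types over $\mathbb A$: $\sigma::= a\mid\sigma\to\sigma\mid\sigma\cap\sigma$ ($a\in\mathbb A$). An intersection type theory $\mathcal T$ over $\mathbb A$ is a set of inequalities $\sigma\le\tau$ (written $\sigma\le_{\mathcal T}\tau$) closed under (refl) $\sigma\le\sigma$; (incl) $\sigma\cap\tau\le\sigma$ and $\sigma\cap\tau\le\tau$; (glb) $\rho\le\sigma$ and $\rho\le\tau$ imply $\rho\le\sigma\cap\tau$; (trans) $\sigma\le\tau$ and $\tau\le\rho$ imply $\sigma\le\rho$. Additional axioms/rules: $(\omega_{top})$ $\sigma\le\omega$; $(\omega_{\to})$ $\omega\le\sigma\to\omega$; $(\to\cap)$ $(\sigma\to\tau)\cap(\sigma\to\rho)\le\sigma\to(\tau\cap\rho)$;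 $(\to)$ $\sigma_2\le\sigma_1$ and $\tau_1\le\tau_2$ imply $\sigma_1\to\tau_1\le\sigma_2\to\tau_2$. $\mathcal T_{CD}$ = smallest type theory over $\mathbb A_\infty$; $\mathcal T_{CDS}$ = smallest over $\mathbb A^\omega_\infty$ containing $(\omega_{top})$; $\mathcal T_{CDV}$ = smallest over $\mathbb A_\infty$ closed under $(\to)$ and $(\to\cap)$; $\mathcal T_{BCD}$ = smallest over $\mathbb A^\omega_\infty$ closed under $(\to),(\to\cap),(\omega_{top}),(\omega_\to)$. We abbreviate these as CD, CDS, CDV, BCD. $\Delta$-terms: $\Delta::=u_\Delta\mid x\mid\lambda x{:}\sigma.\Delta\mid\Delta\,\Delta\mid\langle\Delta,\Delta\rangle\mid pr_1\Delta\mid pr_2\Delta\mid\Delta^\sigma$, where for every (not necessarily typable) $\Delta$-term $\Delta$ there is a constant $u_\Delta$. The essence $\|\Delta\|$ is the pure $\lambda$-term defined by $\|x\|=x$, $\|u_\Delta\|=\|\Delta\|$, $\|\Delta^\sigma\|=\|\Delta\|$, $\|\lambda x{:}\sigma.\Delta\|=\lambda x.\|\Delta\|$, $\|\Delta_1\Delta_2\|=\|\Delta_1\|\,\|\Delta_2\|$, $\|\langle\Delta_1,\Delta_2\rangle\|=\|\Delta_1\|$, $\|pr_i\Delta\|=\|\Delta\|$. Let $\mathcal R$ be one of $\equiv$ (syntactic identity up to $\alpha$), $=_\beta$, $=_{\beta\eta}$ on pure $\lambda$-terms. A basis $B$ is a finite set of declarations $x{:}\sigma$ with distinct variables. The typed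 system $\Delta^{\mathcal T}_{\mathcal R}$ derives $B\vdash^{\mathcal T}_{\mathcal R}\Delta:\sigma$ by: (top) $B\vdash u_\Delta:\omega$ if $\omega\in\mathbb A$; (ax) $B\vdash x:\sigma$ if $x{:}\sigma\in B$; ($\to$I) from $B,x{:}\sigma\vdash\Delta:\tau$ infer $B\vdash\lambda x{:}\sigma.\Delta:\sigma\to\tau$; ($\to$E) from $B\vdash\Delta_1:\sigma\to\tau$ and $B\vdash\Delta_2:\sigma$ infer $B\vdash\Delta_1\Delta_2:\tau$; ($\cap$I) from $B\vdash\Delta_1:\sigma$, $B\vdash\Delta_2:\tau$ and $\|\Delta_1\|\mathrel{\mathcal R}\|\Delta_2\|$ infer $B\vdash\langle\Delta_1,\Delta_2\rangle:\sigma\cap\tau$; ($\cap$E$_1$) from $B\vdash\Delta:\sigma\cap\tau$ infer $B\vdash pr_1\Delta:\sigma$; ($\cap$E$_2$) from $B\vdash\Delta:\sigma\cap\tau$ infer $B\vdash pr_2\Delta:\tau$; ($\le_{\mathcal T}$) from $B\vdash\Delta:\sigma$ and $\sigma\le_{\mathcal T}\tau$ infer $B\vdash\Delta^\tau:\tau$. We write $\Delta^{CD}_{\mathcal R}$ for $\Delta^{\mathcal T_{CD}}_{\mathcal R}$, etc. *)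

From Stdlib Require Import Arith List Relations.
Import ListNotations.

(** * Pure lambda-terms (de Bruijn indices; syntactic identity = alpha-equivalence) *)
Inductive term : Type :=
| Var : nat -> term
| Lam : term -> term
| App : term -> term -> term.

Fixpoint lift (k c : nat) (t : term) : term :=
  match t with
  | Var n => Var (if n <? c then n else n + k)
  | Lam t1 => Lam (lift k (S c) t1)
  | App t1 t2 => App (lift k c t1) (lift k c t2)
  end.

Fixpoint subst (j : nat) (N : term) (t : term) : term :=
  match t with
  | Var n => if n =? j then lift j 0 N else if j <? n then Var (pred n) else Var n
  | Lam t1 => Lam (subst (S j) N t1)
  | App t1 t2 => App (subst j N t1) (subst j N t2)
  end.

Inductive compat (r : term -> term -> Prop) : term -> term -> Prop :=
| compat_root M N : r M N -> compat r M N
| compat_lam M N : compat r M N -> compat r (Lam M) (Lam N)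
| compat_appl M M' N : compat r M M' -> compat r (App M N) (App M' N)
| compat_appr M N N' : compat r N N' -> compat r (App M N) (App M N').

Inductive beta_root : term -> term -> Prop :=
| beta_root_intro M N : beta_root (App (Lam M) N) (subst 0 N M).

Inductive eta_root : term -> term -> Prop :=
| eta_root_intro M : eta_root (Lam (App (lift 1 0 M) (Var 0))) M.

Definition beta_step : term -> term -> Prop := compat beta_root.
Definition beta_eta_step : term -> term -> Prop :=
  compat (fun M N => beta_root M N \/ eta_root M N).

Definition beta_eq : term -> term -> Prop := clos_refl_sym_trans term beta_step.
Definition beta_eta_eq : term -> term -> Prop := clos_refl_sym_trans term beta_eta_step.

Definition SN (M : term) : Prop := Acc (fun N M => beta_step M N) M.

Inductive ty (A : Type) : Type :=
| Atom : A -> ty A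
| Arr : ty A -> ty A -> ty A
| Inter : ty A -> ty A -> ty A.
Arguments Atom {A}. Arguments Arr {A}. Arguments Inter {A}.

(** The smallest type theory over [A] closed under the selected rules.
    [om = Some w] : the atom set contains omega (= w) and (omega_top) holds.
    [arr = true]  : closure under (->) and (-> cap).
    (omega_->) is included exactly when both hold (BCD). *)
Inductive tle {A : Type} (om : option A) (arr : bool) : ty A -> ty A -> Prop :=
| tle_refl s : tle om arr s s
| tle_incl_l s t : tle om arr (Inter s t) s
| tle_incl_r s t : tle om arr (Inter s t) t
| tle_glb r s t : tle om arr r s -> tle om arr r t -> tle om arr r (Inter s t)
| tle_trans s t r : tle om arr s t -> tle om arr t r -> tle om arr s r
| tle_omega_top w s : om = Some w -> tle om arr s (Atom w)
| tle_omega_arr w s : om = Some w -> arr = true ->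
    tle om arr (Atom w) (Arr s (Atom w))
| tle_arr_inter s t r : arr = true ->
    tle om arr (Inter (Arr s t) (Arr s r)) (Arr s (Inter t r))
| tle_arr s1 s2 t1 t2 : arr = true -> tle om arr s2 s1 -> tle om arr t1 t2 ->
    tle om arr (Arr s1 t1) (Arr s2 t2).

(** * Delta-terms (de Bruijn); [DU d] is the constant u_d. *)
Inductive dterm (A : Type) : Type :=
| DU : dterm A -> dterm A
| DVar : nat -> dterm A
| DLam : ty A -> dterm A -> dterm A
| DApp : dterm A -> dterm A -> dterm A
| DPair : dterm A -> dterm A -> dterm A
| DPr1 : dterm A -> dterm A
| DPr2 : dterm A -> dterm A
| DAnn : dterm A -> ty A -> dterm A.
Arguments DU {A}. Arguments DVar {A}. Arguments DLam {A}. Arguments DApp {A}.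
Arguments DPair {A}. Arguments DPr1 {A}. Arguments DPr2 {A}. Arguments DAnn {A}.

Fixpoint essence {A : Type} (d : dterm A) : term :=
  match d with
  | DU d1 => essence d1
  | DVar n => Var n
  | DLam _ d1 => Lam (essence d1)
  | DApp d1 d2 => App (essence d1) (essence d2)
  | DPair d1 _ => essence d1
  | DPr1 d1 => essence d1
  | DPr2 d1 => essence d1
  | DAnn d1 _ => essence d1
  end.

(** Typing.  A basis is a list: index [n] is declared with type [nth n B]. *)
Inductive typed {A : Type} (om : option A) (arr : bool) (R : term -> term -> Prop)
  : list (ty A) -> dterm A -> ty A -> Prop :=
| ty_top B d w : om = Some w -> typed om arr R B (DU d) (Atom w)
| ty_ax B n s : nth_error B n = Some s -> typed om arr R B (DVar n) s
| ty_absI B s d t : typed om arr R (s :: B) d t -> typed om arr R B (DLam s d) (Arr s t)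
| ty_appE B d1 d2 s t : typed om arr R B d1 (Arr s t) -> typed om arr R B d2 s ->
    typed om arr R B (DApp d1 d2) t
| ty_interI B d1 d2 s t : typed om arr R B d1 s -> typed om arr R B d2 t ->
    R (essence d1) (essence d2) -> typed om arr R B (DPair d1 d2) (Inter s t)
| ty_interE1 B d s t : typed om arr R B d (Inter s t) -> typed om arr R B (DPr1 d) s
| ty_interE2 B d s t : typed om arr R B d (Inter s t) -> typed om arr R B (DPr2 d) t
| ty_le B d s t : typed om arr R B d s -> tle om arr s t -> typed om arr R B (DAnn d t) t.

Inductive theory : Type := CD | CDS | CDV | BCD.

(** A_infty = nat ; A_infty^omega = option nat with omega = None. *)
Definition atoms (T : theory) : Type :=
  match T with CD | CDV => nat | CDS | BCD => option nat end.

Definition omega_of (T : theory) : option (atoms T) :=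
  match T return option (atoms T) with
  | CD => None | CDV => None | CDS => Some None | BCD => Some None
  end.

Definition arrows_of (T : theory) : bool :=
  match T with CD | CDS => false | CDV | BCD => true end.

Inductive rel : Type := RSyn | RBeta | RBetaEta.

Definition rel_of (r : rel) : term -> term -> Prop :=
  match r with RSyn => @eq term | RBeta => beta_eq | RBetaEta => beta_eta_eq end.

Definition considered (T : theory) (r : rel) : Prop :=
  match r with
  | RSyn | RBeta => True
  | RBetaEta => T = CDV \/ T = BCD
  end.

Definition derivable (T : theory) (r : rel)
  (B : list (ty (atoms T))) (d : dterm (atoms T)) (s : ty (atoms T)) : Prop :=
  typed (omega_of T) (arrows_of T) (rel_of r) B d s.

(* Every strongly normalizing term is typable in Curry-style intersection type
   assignment over the smallest theory CD, by well-founded induction on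
   "one beta-step or immediate subterm".  A spine x P1 .. Pn is typed by giving
   x an arrow from types of the P_i to an atom; an abstraction by typing its
   body; a head redex (\x.M) N P1 .. Pn by typing its reduct and expanding.
   Expansion works with intersections: x receives the intersection of the types
   of all occurrences of N, and the typability of N (part of strong
   normalization) supplies a type when x does not occur.  A Curry derivation is
   then decorated to a Delta-term; both components of every pair decorate the
   same pure term, and the inclusions of CD hold in every theory, so the
   decoration is derivable in each system, whatever T and R are. *)

From Stdlib Require Import List Arith Lia Relations Wellfounded.Transitive_Closure.
Import ListNotations.

Section CurryTyping.
Context {A : Type}.

Inductive ct : list (ty A) -> term -> ty A -> Prop :=
| ct_var G n s : nth_error G n = Some s -> ct G (Var n) s
| ct_lam G s M t : ct (s :: G) M t -> ct G (Lam M) (Arr s t)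
| ct_app G M N s t : ct G M (Arr s t) -> ct G N s -> ct G (App M N) t
| ct_inter G M s t : ct G M s -> ct G M t -> ct G M (Inter s t)
| ct_sub G M s t : ct G M s -> tle None false s t -> ct G M t.

Definition basis_le (G' G : list (ty A)) : Prop :=
  forall n s, nth_error G n = Some s ->
  exists s', nth_error G' n = Some s' /\ tle None false s' s.

Lemma basis_le_refl G : basis_le G G.
Proof. intros n s Hs; exists s; split; [exact Hs | constructor]. Qed.

Lemma basis_le_nil G : basis_le G [].
Proof. intros [|n] s Hs; discriminate. Qed.

Lemma basis_le_cons s' s G' G :
  tle None false s' s -> basis_le G' G -> basis_le (s' :: G') (s :: G).
Proof. intros Hs HG [|n] r Hr; simpl in *; [injection Hr as <-; eauto | auto]. Qed.

Lemma basis_le_app_cons Hb K s' s :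
  tle None false s' s -> basis_le (Hb ++ s' :: K) (Hb ++ s :: K).
Proof.
  intros Hs; induction Hb; simpl; apply basis_le_cons; auto using basis_le_refl;
  constructor.
Qed.

Lemma ct_weaken G M t : ct G M t -> forall G', basis_le G' G -> ct G' M t.
Proof.
  induction 1; intros G' HG.
  - destruct (HG _ _ H) as (s' & Hs' & Hle). eapply ct_sub; [constructor | ]; eauto.
  - constructor. apply IHct, basis_le_cons; [constructor | exact HG].
  - econstructor; eauto.
  - constructor; auto.
  - eapply ct_sub; eauto.
Qed.

Fixpoint basis_meet (G1 G2 : list (ty A)) : list (ty A) :=
  match G1, G2 with
  | [], _ => G2
  | _, [] => G1
  | s1 :: G1, s2 :: G2 => Inter s1 s2 :: basis_meet G1 G2
  end.

Lemma basis_meet_le_l G1 G2 : basis_le (basis_meet G1 G2) G1.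
Proof.
  revert G2; induction G1 as [|s1 G1 IH]; intros [|s2 G2]; simpl;
  auto using basis_le_refl, basis_le_nil.
  apply basis_le_cons; [constructor | apply IH].
Qed.

Lemma basis_meet_le_r G1 G2 : basis_le (basis_meet G1 G2) G2.
Proof.
  revert G2; induction G1 as [|s1 G1 IH]; intros [|s2 G2]; simpl;
  auto using basis_le_refl, basis_le_nil.
  apply basis_le_cons; [constructor | apply IH].
Qed.

Lemma ct_unlift Aa Hb K Y t :
  ct (Aa ++ Hb ++ K) (lift (length Hb) (length Aa) Y) t -> ct (Aa ++ K) Y t.
Proof.
  intros H; remember (Aa ++ Hb ++ K) as G eqn:EG;
  remember (lift (length Hb) (length Aa) Y) as X eqn:EX.
  revert Aa Y EG EX; induction H; intros Aa Y EG EX; subst G.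
  - destruct Y as [m | |]; simpl in EX; inversion EX; subst; constructor.
    destruct (Nat.ltb_spec m (length Aa)).
    + rewrite nth_error_app1 in * by lia; assumption.
    + rewrite !nth_error_app2 in H by lia. rewrite nth_error_app2 by lia.
      now replace (m - length Aa) with (m + length Hb - length Aa - length Hb) by lia.
  - destruct Y; simpl in EX; inversion EX; subst.
    constructor; apply (IHct (s :: Aa)); reflexivity.
  - destruct Y; simpl in EX; inversion EX; subst. econstructor; eauto.
  - constructor; eauto.
  - eapply ct_sub; eauto.
Qed.

Lemma ct_subst_hole Hb K N t :
  ct (Hb ++ K) (lift (length Hb) 0 N) t ->
  exists rho, ct (Hb ++ rho :: K) (Var (length Hb)) t /\ ct K N rho.
Proof.
  intros H; exists t; split.
  - constructor. rewrite nth_error_app2, Nat.sub_diag by lia. reflexivity.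
  - exact (ct_unlift [] Hb K N t H).
Qed.

Lemma ct_subst_expand Hb K N M t rho0 :
  ct (Hb ++ K) (subst (length Hb) N M) t -> ct K N rho0 ->
  exists rho, ct (Hb ++ rho :: K) M t /\ ct K N rho.
Proof.
  intros H HN; remember (Hb ++ K) as G eqn:EG;
  remember (subst (length Hb) N M) as X eqn:EX.
  revert Hb M EG EX; induction H; intros Hb Mx EG EX; subst G.
  - destruct Mx as [m | |]; simpl in EX; try discriminate.
    destruct (Nat.eqb_spec m (length Hb)) as [Hm | Hm]; [subst m | ].
    { apply ct_subst_hole; rewrite <- EX; constructor; assumption. }
    exists rho0; split; [constructor | exact HN].
    destruct (Nat.ltb_spec (length Hb) m); injection EX as ->.
    + rewrite nth_error_app2 in H by lia. rewrite nth_error_app2 by lia.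
      now replace (m - length Hb) with (S (Nat.pred m - length Hb)) by lia.
    + rewrite nth_error_app1 in * by lia; assumption.
  - destruct Mx as [m | M1 |]; simpl in EX; try discriminate.
    + destruct (Nat.eqb_spec m (length Hb)) as [Hm | Hm]; [subst m | ].
      * apply ct_subst_hole; rewrite <- EX; constructor; assumption.
      * destruct (length Hb <? m); discriminate.
    + injection EX as ->.
      destruct (IHct (s :: Hb) M1 eq_refl eq_refl) as (rho & H1 & H2).
      exists rho; split; [constructor | ]; assumption.
  - destruct Mx as [m | | M1 M2]; simpl in EX; try discriminate.
    + destruct (Nat.eqb_spec m (length Hb)) as [Hm | Hm]; [subst m | ].
      * apply ct_subst_hole; rewrite <- EX; econstructor; eassumption.
      * destruct (length Hb <? m); discriminate.
    + injection EX as -> ->.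
      destruct (IHct1 Hb M1 eq_refl eq_refl) as (rho1 & H1 & HN1).
      destruct (IHct2 Hb M2 eq_refl eq_refl) as (rho2 & H2 & HN2).
      exists (Inter rho1 rho2); split; [ | constructor; assumption].
      econstructor; eapply ct_weaken; eauto; apply basis_le_app_cons; constructor.
  - destruct (IHct1 Hb Mx eq_refl EX) as (rho1 & H1 & HN1).
    destruct (IHct2 Hb Mx eq_refl EX) as (rho2 & H2 & HN2).
    exists (Inter rho1 rho2); split; [ | constructor; assumption].
    constructor; eapply ct_weaken; eauto; apply basis_le_app_cons; constructor.
  - destruct (IHct Hb Mx eq_refl EX) as (rho & H1 & HN1).
    exists rho; split; [eapply ct_sub | ]; eassumption.
Qed.

Lemma ct_beta_expand G M N rho0 u :
  ct G N rho0 -> ct G (subst 0 N M) u -> ct G (App (Lam M) N) u.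
Proof.
  intros HN Hu.
  destruct (ct_subst_expand [] G N M u rho0 Hu HN) as (rho & HM & HN').
  econstructor; [constructor; exact HM | exact HN'].
Qed.

Fixpoint apps (h : term) (Ps : list term) : term :=
  match Ps with [] => h | P :: Ps => apps (App h P) Ps end.

Fixpoint arrs (ss : list (ty A)) (t : ty A) : ty A :=
  match ss with [] => t | s :: ss => Arr s (arrs ss t) end.

Lemma ct_apps G h Ps ss t :
  ct G h (arrs ss t) -> Forall2 (ct G) Ps ss -> ct G (apps h Ps) t.
Proof.
  intros Hh HPs; revert h Hh; induction HPs; simpl; intros h Hh;
  [ | apply IHHPs; econstructor]; eassumption.
Qed.

Lemma ct_app_head_replace G F F' P :
  (forall u, ct G F u -> ct G F' u) -> forall t, ct G (App F P) t -> ct G (App F' P) t.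
Proof.
  intros HF t H; remember (App F P) as X eqn:EX; induction H; inversion EX; subst.
  - econstructor; eauto.
  - constructor; auto.
  - eapply ct_sub; eauto.
Qed.

Lemma ct_apps_head_replace G F F' Ps :
  (forall u, ct G F u -> ct G F' u) -> forall t, ct G (apps F Ps) t -> ct G (apps F' Ps) t.
Proof.
  revert F F'; induction Ps; simpl; intros F F' HF; [exact HF | ].
  apply IHPs, ct_app_head_replace, HF.
Qed.

End CurryTyping.

Lemma apps_snoc h Ps P : apps h (Ps ++ [P]) = App (apps h Ps) P.
Proof. revert h; induction Ps; simpl; auto. Qed.

Lemma apps_spine M :
  exists Ps, (exists n, M = apps (Var n) Ps) \/ (exists M1, M = apps (Lam M1) Ps).
Proof.
  induction M as [n | M1 _ | M1 [Ps IH] M2 _].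
  - exists []; left; exists n; reflexivity.
  - exists []; right; exists M1; reflexivity.
  - exists (Ps ++ [M2]).
    destruct IH as [[n ->] | [M' ->]]; [left | right]; eexists; apply eq_sym, apps_snoc.
Qed.

Lemma beta_step_apps a b Ps : beta_step a b -> beta_step (apps a Ps) (apps b Ps).
Proof.
  revert a b; induction Ps as [|P Ps IH]; simpl; intros a b H; [exact H | ].
  apply IH, compat_appl, H.
Qed.

Inductive subterm1 : term -> term -> Prop :=
| subterm1_lam M : subterm1 M (Lam M)
| subterm1_appl M N : subterm1 M (App M N)
| subterm1_appr M N : subterm1 N (App M N).

Definition sn_order (y x : term) : Prop := beta_step x y \/ subterm1 y x.

Lemma beta_step_subterm_lift y M :
  clos_refl_trans term subterm1 y M -> forall z, beta_step y z ->
  exists M', beta_step M M' /\ clos_refl_trans term subterm1 z M'.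
Proof.
  induction 1 as [y M Hy | M | y M1 M _ IH1 _ IH2]; intros z Hz.
  - destruct Hy.
    + exists (Lam z); split; [apply compat_lam | apply rt_step; constructor]; auto.
    + exists (App z N); split; [apply compat_appl | apply rt_step; constructor]; auto.
    + exists (App M z); split; [apply compat_appr | apply rt_step; constructor]; auto.
  - exists z; split; [exact Hz | apply rt_refl].
  - destruct (IH1 z Hz) as (M1' & H1 & H2).
    destruct (IH2 M1' H1) as (M' & H3 & H4).
    exists M'; split; [ | eapply rt_trans]; eauto.
Qed.

Lemma sn_subterm_acc M :
  SN M -> forall y, clos_refl_trans term subterm1 y M -> Acc sn_order y.
Proof.
  intros HM; induction HM as [M _ IHM].
  intros y; induction y as [n | y IHy | y1 IHy1 y2 IHy2]; intros Hy;
    constructor; intros z [Hz | Hz].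
  all: try (destruct (beta_step_subterm_lift _ _ Hy _ Hz) as (M' & HM' & Hz');
            exact (IHM M' HM' z Hz')).
  all: assert (Hz' : clos_refl_trans term subterm1 z M)
         by (eapply rt_trans; [apply rt_step, Hz | exact Hy]).
  all: inversion Hz; subst; auto.
Qed.

Lemma apps_head_above h Ps y :
  clos_trans term sn_order y h -> clos_trans term sn_order y (apps h Ps).
Proof.
  revert h; induction Ps as [|P Ps IH]; simpl; intros h H; [exact H | ].
  apply IH; eapply t_trans; [exact H | apply t_step; right; constructor].
Qed.

Lemma apps_arg_below h Ps P : In P Ps -> clos_trans term sn_order P (apps h Ps).
Proof.
  revert h; induction Ps as [|Q Ps IH]; simpl; intros h HP; [contradiction | ].
  destruct HP as [<- | HP]; [ | auto].
  apply apps_head_above, t_step; right; constructor.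
Qed.

Section Typability.
Context {A : Type}.
Variable a : A.

Definition ct_typable (M : term) : Prop := exists (G : list (ty A)) s, ct G M s.

Lemma ct_typable_common_basis Ps :
  Forall ct_typable Ps -> exists (G : list (ty A)) ss, Forall2 (ct G) Ps ss.
Proof.
  induction 1 as [| P Ps [G1 [s1 H1]] _ [G2 [ss H2]]]; [exists [], []; constructor | ].
  exists (basis_meet G1 G2), (s1 :: ss); constructor.
  - eapply ct_weaken; [exact H1 | apply basis_meet_le_l].
  - eapply Forall2_impl; [ | exact H2].
    intros; eapply ct_weaken; [eassumption | apply basis_meet_le_r].
Qed.

Definition basis_single (n : nat) (s : ty A) : list (ty A) := repeat (Atom a) n ++ [s].

Lemma basis_single_nth n s : nth_error (basis_single n s) n = Some s.
Proof.
  unfold basis_single; rewrite nth_error_app2; rewrite repeat_length, ?Nat.sub_diag;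
  reflexivity.
Qed.

Lemma ct_typable_var_spine n Ps : Forall ct_typable Ps -> ct_typable (apps (Var n) Ps).
Proof.
  intros HPs; destruct (ct_typable_common_basis Ps HPs) as (G & ss & H).
  exists (basis_meet G (basis_single n (arrs ss (Atom a)))), (Atom a).
  eapply ct_apps.
  - eapply ct_weaken; [constructor; apply basis_single_nth | apply basis_meet_le_r].
  - eapply Forall2_impl; [ | exact H].
    intros; eapply ct_weaken; [eassumption | apply basis_meet_le_l].
Qed.

Lemma ct_typable_lam M : ct_typable M -> ct_typable (Lam M).
Proof.
  intros (G & t & H); destruct G as [| s G].
  - exists [], (Arr (Atom a) t); constructor.
    eapply ct_weaken; [exact H | apply basis_le_nil].
  - exists G, (Arr s t); constructor; exact H.
Qed.

Lemma ct_typable_redex_spine M N Ps :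
  ct_typable N -> ct_typable (apps (subst 0 N M) Ps) ->
  ct_typable (apps (App (Lam M) N) Ps).
Proof.
  intros (G1 & rho & HN) (G2 & t & HR); exists (basis_meet G1 G2), t.
  eapply ct_apps_head_replace; [ | eapply ct_weaken; [exact HR | apply basis_meet_le_r]].
  intros u Hu; eapply ct_beta_expand; [ | exact Hu].
  eapply ct_weaken; [exact HN | apply basis_meet_le_l].
Qed.

Lemma sn_ct_typable M : SN M -> ct_typable M.
Proof.
  intros HM.
  assert (Hacc : Acc (clos_trans term sn_order) M)
    by (apply Acc_clos_trans, (sn_subterm_acc M HM), rt_refl).
  clear HM; induction Hacc as [M _ IH].
  destruct (apps_spine M) as [Ps [[n ->] | [M1 ->]]].
  - apply ct_typable_var_spine, Forall_forall.
    intros P HP; apply IH, apps_arg_below, HP.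
  - destruct Ps as [| N Ps]; simpl.
    + apply ct_typable_lam, IH, t_step; right; constructor.
    + apply ct_typable_redex_spine.
      * apply IH; exact (apps_arg_below (Lam M1) (N :: Ps) N (or_introl eq_refl)).
      * apply IH, t_step; left.
        exact (beta_step_apps _ _ Ps (compat_root _ _ _ (beta_root_intro M1 N))).
Qed.

End Typability.

Section Decoration.
Context {A : Type}.
Variables (om : option A) (arr : bool) (R : term -> term -> Prop).
Hypothesis R_refl : forall M, R M M.

Lemma tle_CD_incl s t : tle None false s t -> tle om arr s t.
Proof. induction 1; try discriminate; econstructor; eauto. Qed.

Lemma ct_decorate G M t : ct G M t -> exists d, essence d = M /\ typed om arr R G d t.
Proof.
  induction 1 as [G n s Hn | G s M t _ [d [<- Hd]]
                 | G M N s t _ [d1 [<- H1]] _ [d2 [<- H2]]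
                 | G M s t _ [d1 [E1 H1]] _ [d2 [E2 H2]] | G M s t _ [d [E Hd]] Hle].
  - exists (DVar n); split; [reflexivity | constructor; exact Hn].
  - exists (DLam s d); split; [reflexivity | constructor; exact Hd].
  - exists (DApp d1 d2); split; [reflexivity | econstructor; eassumption].
  - exists (DPair d1 d2); split; [exact E1 | constructor; auto].
    rewrite E1, E2; apply R_refl.
  - exists (DAnn d t); split; [exact E | econstructor; [exact Hd | apply tle_CD_incl, Hle]].
Qed.

End Decoration.

Lemma rel_of_refl r M : rel_of r M M.
Proof. destruct r; simpl; [reflexivity | apply rst_refl | apply rst_refl]. Qed.

Definition some_atom (T : theory) : atoms T :=
  match T return atoms T with CD => 0 | CDV => 0 | CDS => Some 0 | BCD => Some 0 end.

Theorem mainTheorem15 :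
  forall (T : theory) (r : rel), considered T r ->
  forall M : term, SN M ->
  exists (B : list (ty (atoms T))) (s : ty (atoms T)) (d : dterm (atoms T)),
    essence d = M /\ derivable T r B d s.
Proof.
  intros T r _ M HM.
  destruct (sn_ct_typable (some_atom T) M HM) as (G & s & HG).
  destruct (ct_decorate (omega_of T) (arrows_of T) (rel_of r) (rel_of_refl r) G M s HG)
    as (d & Hd & Htyped).
  exists G, s, d; split; assumption.
Qed.
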